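(* Let $k$ be an infinite field of characteristic $0$ and let $W=(L,V)=\big(L(x_1,\dots,x_n),\bigoplus_{i=1}^nA(x_1,\dots,x_n)y_i\big)$ be the free representation with $n$ Lie-algebra generators and $n$ module generators. Then $(L\oplus V,p_V)$, with bracket $[l_1+v_1,l_2+v_2]=[l_1,l_2]+l_1\circ v_2-l_2\circ v_1$ and $p_V(l+v)=v$, is a free Lie algebra with projection-derivation with the $n$ free generators $m_i=x_i+y_i$, $1\le i\le n$.
   Context: $L(x_1,\dots,x_n)$ is the free Lie algebra over $k$, $A(x_1,\dots,x_n)$ the free associative algebra with unit (universal enveloping algebra of it), acting on the free module $\bigoplus_i A(x_1,\dots,x_n)y_i$. A Lie algebra with projection-derivation is a Lie algebra $M$ with linear $p:M\to M$ such that $p^2=p$ and $p[m_1,m_2]=[pm_1,m_2]+[m_1,pm_2]$; homomorphisms are Lie homomorphisms commuting with $p$. Free means: every map of the generators into any Lie algebra with projection-derivation extends uniquely to a homomorphism. *)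

From HB Require Import structures.
From mathcomp Require Import all_boot all_algebra.
Set Implicit Arguments. Unset Strict Implicit. Unset Printing Implicit Defensive.
Import GRing.Theory.
Local Open Scope ring_scope.

Section Defs.
Variable k : fieldType.

Definition linear_map (A B : lmodType k) (f : A -> B) : Prop :=
  forall (r : k) (a b : A), f (r *: a + b) = r *: f a + f b.

Definition lie_axioms (A : lmodType k) (br : A -> A -> A) : Prop :=
  [/\ forall (r : k) (a b c : A), br (r *: a + b) c = r *: br a c + br b c,
      forall (r : k) (a b c : A), br a (r *: b + c) = r *: br a b + br a c,
      forall a : A, br a a = 0 &
      forall a b c : A, br a (br b c) + br b (br c a) + br c (br a b) = 0].

Definition pd_axioms (A : lmodType k) (br : A -> A -> A) (p : A -> A) : Prop :=
  [/\ linear_map p,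
      forall a : A, p (p a) = p a &
      forall a b : A, p (br a b) = br (p a) b + br a (p b)].

Record lieAlgebra := LieAlgebra {
  lie_sort :> lmodType k;
  lie_br : lie_sort -> lie_sort -> lie_sort;
  lie_ax : lie_axioms lie_br }.

Record liePDAlgebra := LiePDAlgebra {
  lpd_lie :> lieAlgebra;
  lpd_p : lpd_lie -> lpd_lie;
  lpd_ax : pd_axioms (@lie_br lpd_lie) lpd_p }.

Definition lie_morph (A B : lmodType k) (brA : A -> A -> A) (brB : B -> B -> B)
  (f : A -> B) : Prop :=
  linear_map f /\ forall a b : A, f (brA a b) = brB (f a) (f b).

Definition lie_module_axioms (L : lieAlgebra) (M : lmodType k)
  (act : L -> M -> M) : Prop :=
  [/\ forall (r : k) (a b : L) (m : M), act (r *: a + b) m = r *: act a m + act b m,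
      forall (r : k) (a : L) (m m' : M), act a (r *: m + m') = r *: act a m + act a m' &
      forall (a b : L) (m : M),
        act (lie_br a b) m = act a (act b m) - act b (act a m)].

Record lieModule (L : lieAlgebra) := LieModule {
  lmod_sort :> lmodType k;
  lmod_act : L -> lmod_sort -> lmod_sort;
  lmod_ax : lie_module_axioms lmod_act }.

Definition lmod_morph (L : lieAlgebra) (M N : lieModule L) (f : M -> N) : Prop :=
  linear_map f /\ forall (a : L) (m : M), f (lmod_act a m) = lmod_act a (f m).

Definition free_lie_algebra (n : nat) (L : lieAlgebra) (x : 'I_n -> L) : Prop :=
  forall (M : lieAlgebra) (g : 'I_n -> M),
    exists f : L -> M,
      [/\ lie_morph (@lie_br L) (@lie_br M) f,
          forall i, f (x i) = g i &
          forall f' : L -> M, lie_morph (@lie_br L) (@lie_br M) f' ->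
            (forall i, f' (x i) = g i) -> f' =1 f].

Definition free_lie_module (n : nat) (L : lieAlgebra) (V : lieModule L)
  (y : 'I_n -> V) : Prop :=
  forall (M : lieModule L) (g : 'I_n -> M),
    exists f : V -> M,
      [/\ lmod_morph f,
          forall i, f (y i) = g i &
          forall f' : V -> M, lmod_morph f' ->
            (forall i, f' (y i) = g i) -> f' =1 f].

Definition free_lie_pd (n : nat) (A : lmodType k) (br : A -> A -> A)
  (p : A -> A) (m : 'I_n -> A) : Prop :=
  forall (M : liePDAlgebra) (g : 'I_n -> M),
    exists f : A -> M,
      [/\ lie_morph br (@lie_br M) f,
          forall a, f (p a) = lpd_p (f a),
          forall i, f (m i) = g i &
          forall f' : A -> M, lie_morph br (@lie_br M) f' ->
            (forall a, f' (p a) = lpd_p (f' a)) ->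
            (forall i, f' (m i) = g i) -> f' =1 f].

Definition sd_bracket (L : lieAlgebra) (V : lieModule L)
  (u w : (L * V)%type) : (L * V)%type :=
  (lie_br u.1 w.1, lmod_act u.1 w.2 - lmod_act w.1 u.2).

Definition sd_projV (L : lieAlgebra) (V : lieModule L) (u : (L * V)%type)
  : (L * V)%type := (0, u.2).

End Defs.

From mathcomp Require Import all_boot all_algebra.
Import GRing.Theory.
Local Open Scope ring_scope.
Set Implicit Arguments. Unset Strict Implicit. Unset Printing Implicit Defensive.

(* In a Lie algebra M with projection-derivation p (and 2 invertible), the
   image of p is abelian, since q = [p a, p b] satisfies p q = 2 q and
   p (p q) = p q.  Hence 1 - p is a Lie endomorphism onto ker p, and ker p
   acts by the bracket on the abelian subalgebra im p.  Given targets g_i in M, the free Lie algebra L sends x_i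
   to g_i - p g_i and lands in ker p (compare with (1 - p) composed with it),
   and the free L-module V sends y_i to p g_i and lands in im p (compare with
   p composed with it).  The two maps glue to a homomorphism on L (+) V
   commuting with p_V; conversely any such homomorphism restricts to a Lie
   morphism on L and a module morphism on V with the same values on the
   generators, because (x_i, 0) = m_i - p_V m_i and (0, y_i) = p_V m_i. *)

Section LinearMap.
Variables (k : fieldType) (A B : lmodType k) (f : A -> B).
Hypothesis f_lin : linear_map f.

Lemma linear_map0 : f 0 = 0.
Proof.
have := f_lin 1 0 0; rewrite !scale1r addr0 => /eqP.
by rewrite -subr_eq subrr eq_sym => /eqP.
Qed.

Lemma linear_mapD (a b : A) : f (a + b) = f a + f b.
Proof. by have := f_lin 1 a b; rewrite !scale1r. Qed.

Lemma linear_mapN (a : A) : f (- a) = - f a.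
Proof. by have := f_lin (-1) a 0; rewrite !addr0 linear_map0 addr0 !scaleN1r. Qed.

Lemma linear_mapB (a b : A) : f (a - b) = f a - f b.
Proof. by rewrite linear_mapD linear_mapN. Qed.

End LinearMap.

Lemma linear_map_comp (k : fieldType) (A B C : lmodType k) (f : A -> B) (g : B -> C) :
  linear_map f -> linear_map g -> linear_map (g \o f).
Proof. by move=> f_lin g_lin r a b /=; rewrite f_lin g_lin. Qed.

Section LieAlgebraFacts.
Variables (k : fieldType) (A : lieAlgebra k).
Local Notation br := (@lie_br k A).

Lemma lie_br_linearl c : linear_map (fun a : A => br a c).
Proof. by case: (lie_ax A) => h _ _ _ r a b; apply: h. Qed.

Lemma lie_br_linearr c : linear_map (br c).
Proof. by case: (lie_ax A) => _ h _ _ r a b; apply: h. Qed.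

Lemma lie_brZDl r (a b c : A) : br (r *: a + b) c = r *: br a c + br b c.
Proof. exact: lie_br_linearl. Qed.

Lemma lie_brZDr r (a b c : A) : br c (r *: a + b) = r *: br c a + br c b.
Proof. exact: lie_br_linearr. Qed.

Lemma lie_br0l (c : A) : br 0 c = 0. Proof. exact: (linear_map0 (lie_br_linearl c)). Qed.
Lemma lie_br0r (c : A) : br c 0 = 0. Proof. exact: (linear_map0 (lie_br_linearr c)). Qed.
Lemma lie_brDl (a b c : A) : br (a + b) c = br a c + br b c.
Proof. exact: (linear_mapD (lie_br_linearl c)). Qed.
Lemma lie_brDr (a b c : A) : br c (a + b) = br c a + br c b.
Proof. exact: (linear_mapD (lie_br_linearr c)). Qed.
Lemma lie_brBl (a b c : A) : br (a - b) c = br a c - br b c.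
Proof. exact: (linear_mapB (lie_br_linearl c)). Qed.
Lemma lie_brBr (a b c : A) : br c (a - b) = br c a - br c b.
Proof. exact: (linear_mapB (lie_br_linearr c)). Qed.
Lemma lie_brNr (a c : A) : br c (- a) = - br c a.
Proof. exact: (linear_mapN (lie_br_linearr c)). Qed.

Lemma lie_brxx a : br a a = 0. Proof. by case: (lie_ax A). Qed.

Lemma lie_jacobi a b c : br a (br b c) + br b (br c a) + br c (br a b) = 0.
Proof. by case: (lie_ax A). Qed.

Lemma lie_brC a b : br a b = - br b a.
Proof.
have := lie_brxx (a + b).
rewrite lie_brDl !lie_brDr !lie_brxx add0r addr0 => /eqP.
by rewrite addr_eq0 => /eqP.
Qed.

End LieAlgebraFacts.

Section LieModuleFacts.
Variables (k : fieldType) (L : lieAlgebra k) (V : lieModule L).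
Local Notation act := (@lmod_act k L V).

Lemma lmod_act_linearl m : linear_map (fun a : L => act a m).
Proof. by case: (lmod_ax V) => h _ _ r a b; apply: h. Qed.

Lemma lmod_act_linearr a : linear_map (act a).
Proof. by case: (lmod_ax V) => _ h _ r m m'; apply: h. Qed.

Lemma lmod_actZDl r (a b : L) (m : V) : act (r *: a + b) m = r *: act a m + act b m.
Proof. exact: lmod_act_linearl. Qed.

Lemma lmod_actZDr r (a : L) (m m' : V) : act a (r *: m + m') = r *: act a m + act a m'.
Proof. exact: lmod_act_linearr. Qed.

Lemma lmod_act0l (m : V) : act 0 m = 0. Proof. exact: (linear_map0 (lmod_act_linearl m)). Qed.
Lemma lmod_act0r (a : L) : act a 0 = 0. Proof. exact: (linear_map0 (lmod_act_linearr a)). Qed.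
Lemma lmod_actBr (a : L) (m m' : V) : act a (m - m') = act a m - act a m'.
Proof. exact: (linear_mapB (lmod_act_linearr a)). Qed.

Lemma lmod_act_br a b m : act (lie_br a b) m = act a (act b m) - act b (act a m).
Proof. by case: (lmod_ax V). Qed.

End LieModuleFacts.

Lemma lie_morph_comp (k : fieldType) (A B C : lmodType k) (brA : A -> A -> A)
    (brB : B -> B -> B) (brC : C -> C -> C) (f : A -> B) (g : B -> C) :
  lie_morph brA brB f -> lie_morph brB brC g -> lie_morph brA brC (g \o f).
Proof.
move=> [f_lin f_br] [g_lin g_br]; split; first exact: linear_map_comp.
by move=> a b /=; rewrite f_br g_br.
Qed.

Lemma free_lie_algebra_morph_eq (k : fieldType) (n : nat) (L : lieAlgebra k)
    (x : 'I_n -> L) (M : lieAlgebra k) (f f' : L -> M) :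
  free_lie_algebra x ->
  lie_morph (@lie_br k L) (@lie_br k M) f ->
  lie_morph (@lie_br k L) (@lie_br k M) f' ->
  (forall i, f (x i) = f' (x i)) -> f =1 f'.
Proof.
move=> L_free f_morph f'_morph f_f'.
have [h [_ _ h_unique]] := L_free M (f' \o x).
by move=> l; rewrite (h_unique f) // (h_unique f').
Qed.

Lemma free_lie_module_morph_eq (k : fieldType) (n : nat) (L : lieAlgebra k)
    (V : lieModule L) (y : 'I_n -> V) (M : lieModule L) (f f' : V -> M) :
  free_lie_module y -> lmod_morph f -> lmod_morph f' ->
  (forall i, f (y i) = f' (y i)) -> f =1 f'.
Proof.
move=> V_free f_morph f'_morph f_f'.
have [h [_ _ h_unique]] := V_free M (f' \o y).
by move=> v; rewrite (h_unique f) // (h_unique f').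
Qed.

Section AdjointModule.
Variables (k : fieldType) (L M : lieAlgebra k) (phi : L -> M).
Hypothesis phi_morph : lie_morph (@lie_br k L) (@lie_br k M) phi.

Definition adjoint_act (a : L) (m : M) : M := lie_br (phi a) m.

Lemma adjoint_module_axioms : lie_module_axioms adjoint_act.
Proof.
have [phi_lin phi_br] := phi_morph; rewrite /adjoint_act; split.
- by move=> r a b m; rewrite phi_lin lie_brZDl.
- by move=> r a m m'; rewrite lie_brZDr.
- move=> a b m; rewrite phi_br.
  have := lie_jacobi (phi a) (phi b) m.
  rewrite (lie_brC m (phi a)) (lie_brC m (lie_br (phi a) (phi b))) lie_brNr.
  by move/eqP; rewrite subr_eq0 => /eqP <-.
Qed.

Definition adjoint_module : lieModule L := LieModule adjoint_module_axioms.

End AdjointModule.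

Lemma addr_cyclic_cancel (V : zmodType) (X1 X2 X3 X4 X5 X6 : V) :
  (X1 - X2 - (X3 - X4)) + (X3 - X5 - (X6 - X2)) + (X6 - X4 - (X1 - X5)) = 0.
Proof.
rewrite !opprB !addrA.
rewrite (ACl ((1*12)*(2*7)*(3*10)*(4*5)*(6*11)*(8*9)))%AC /=.
by rewrite subrr addNr subrr addNr addNr addNr !addr0.
Qed.

Section Semidirect.
Variables (k : fieldType) (L : lieAlgebra k) (V : lieModule L).
Local Notation sd_br := (@sd_bracket k L V).
Local Notation p_V := (@sd_projV k L V).

Lemma pair_eq (u w : (L * V)%type) : u.1 = w.1 -> u.2 = w.2 -> u = w.
Proof. by case: u w => ? ? [? ?] /= -> ->. Qed.

Lemma sd_lie_axioms : lie_axioms sd_br.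
Proof.
rewrite /sd_bracket; split.
- move=> r [a al] [b be] [c ga]; apply: pair_eq => /=; first exact: lie_brZDl.
  by rewrite lmod_actZDl lmod_actZDr scalerDr scalerN opprD addrACA.
- move=> r [a al] [b be] [c ga]; apply: pair_eq => /=; first exact: lie_brZDr.
  by rewrite lmod_actZDl lmod_actZDr scalerDr scalerN opprD addrACA.
- by move=> [a al]; apply: pair_eq; rewrite /= ?lie_brxx ?subrr.
- move=> [a al] [b be] [c ga]; apply: pair_eq => /=; first exact: lie_jacobi.
  by rewrite !lmod_actBr !lmod_act_br addr_cyclic_cancel.
Qed.

Lemma sd_pd_axioms : pd_axioms sd_br p_V.
Proof.
rewrite /sd_bracket /sd_projV; split=> //.
- by move=> r [a al] [b be]; apply: pair_eq; rewrite /= ?scaler0 ?addr0.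
- move=> [a al] [b be]; apply: pair_eq => /=.
    by rewrite lie_br0l lie_br0r addr0.
  by rewrite !lmod_act0l sub0r subr0 addrC.
Qed.

Lemma sd_split (u : (L * V)%type) : u = (u.1, 0) + (0, u.2).
Proof. by apply: pair_eq; rewrite /= ?addr0 ?add0r. Qed.

Lemma sd_inl_eq (l : L) (v : V) : (l, 0) = (l, v) - p_V (l, v).
Proof. by apply: pair_eq; rewrite /= ?subr0 ?subrr. Qed.

Lemma sd_inr_eq (l : L) (v : V) : (0, v) = p_V (l, v).
Proof. by []. Qed.

Section Restriction.
Variables (M : lieAlgebra k) (F : (L * V)%type -> M).
Hypothesis F_morph : lie_morph sd_br (@lie_br k M) F.

Lemma sd_inl_lie_morph : lie_morph (@lie_br k L) (@lie_br k M) (fun l => F (l, 0)).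
Proof.
have [F_lin F_br] := F_morph; split=> [r a b | a b] /=.
  by rewrite -F_lin; congr F; apply: pair_eq; rewrite /= ?scaler0 ?addr0.
by rewrite -F_br; congr F; apply: pair_eq => //=; rewrite !lmod_act0r subrr.
Qed.

Lemma sd_inr_lmod_morph :
  lmod_morph (N := adjoint_module sd_inl_lie_morph) (fun v => F (0, v)).
Proof.
have [F_lin F_br] := F_morph; split=> [r a b | a v] /=.
  by rewrite -F_lin; congr F; apply: pair_eq; rewrite /= ?scaler0 ?addr0.
rewrite /adjoint_act -F_br; congr F.
by apply: pair_eq; rewrite /= ?lie_br0r ?lmod_act0l ?subr0.
Qed.

End Restriction.

Section Gluing.
Variables (M : lieAlgebra k) (phi : L -> M).
Hypothesis phi_morph : lie_morph (@lie_br k L) (@lie_br k M) phi.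
Variable psi : V -> M.
Hypothesis psi_morph : lmod_morph (N := adjoint_module phi_morph) psi.
Hypothesis psi_abelian : forall v w, lie_br (psi v) (psi w) = 0.

Definition sd_glue (u : (L * V)%type) : M := phi u.1 + psi u.2.

Lemma sd_glue_lie_morph : lie_morph sd_br (@lie_br k M) sd_glue.
Proof.
have [phi_lin phi_br] := phi_morph; have [psi_lin psi_act] := psi_morph.
rewrite /sd_glue /sd_bracket; split=> [r [a al] [b be] | [a al] [b be]] /=.
  by rewrite phi_lin psi_lin scalerDr addrACA.
rewrite phi_br (linear_mapB psi_lin) !psi_act /adjoint_act /=.
rewrite lie_brDl !lie_brDr psi_abelian (lie_brC (psi al) (phi b)).
by rewrite addr0 addrA.
Qed.

Lemma sd_glue_proj (p : M -> M) :
  linear_map p -> (forall l, p (phi l) = 0) -> (forall v, p (psi v) = psi v) ->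
  forall u, sd_glue (p_V u) = p (sd_glue u).
Proof.
move=> p_lin p_phi p_psi [a al]; rewrite /sd_glue /sd_projV /=.
by rewrite (linear_map0 phi_morph.1) add0r (linear_mapD p_lin) p_phi add0r p_psi.
Qed.

End Gluing.

End Semidirect.

Section ProjectionDerivation.
Variables (k : fieldType) (M : liePDAlgebra k).
Hypothesis two_neq0 : (2%:R : k) != 0.
Local Notation p := (@lpd_p k M).
Local Notation br := (@lie_br k M).

Lemma pd_linear : linear_map p. Proof. by case: (lpd_ax M). Qed.
Lemma pd_idem a : p (p a) = p a. Proof. by case: (lpd_ax M). Qed.
Lemma pd_br a b : p (br a b) = br (p a) b + br a (p b). Proof. by case: (lpd_ax M). Qed.

Lemma lie_br_pd a b : br (p a) (p b) = 0.
Proof.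
set q := br (p a) (p b).
have pq : p q = q + q by rewrite /q pd_br !pd_idem.
have := pd_idem q; rewrite pq (linear_mapD pd_linear) pq => /eqP.
rewrite -subr_eq0 addrK -mulr2n -scaler_nat scaler_eq0 (negbTE two_neq0).
by move/eqP.
Qed.

Lemma pd_compl_lie_morph : lie_morph br br (fun a => a - p a).
Proof.
split=> [r a b | a b].
  by rewrite pd_linear scalerBr opprD addrACA.
by rewrite pd_br lie_brBl !lie_brBr lie_br_pd subr0 opprD addrA addrAC.
Qed.

Lemma pd_compl_idem a : (a - p a) - p (a - p a) = a - p a.
Proof. by rewrite (linear_mapB pd_linear) pd_idem subrr subr0. Qed.

Lemma pd_adjoint_lmod_morph (L : lieAlgebra k) (phi : L -> M)
    (phi_morph : lie_morph (@lie_br k L) br phi) :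
  (forall l, p (phi l) = 0) -> lmod_morph (M := adjoint_module phi_morph) (N := adjoint_module phi_morph) p.
Proof.
move=> p_phi; split=> [| a m]; first exact: pd_linear.
by rewrite /= /adjoint_act pd_br p_phi lie_br0l add0r.
Qed.

End ProjectionDerivation.

Lemma sd_free_lie_pd (k : fieldType) (two_neq0 : (2%:R : k) != 0) (n : nat)
    (L : lieAlgebra k) (x : 'I_n -> L) (L_free : free_lie_algebra x)
    (V : lieModule L) (y : 'I_n -> V) (V_free : free_lie_module y) :
  free_lie_pd (@sd_bracket k L V) (@sd_projV k L V) (fun i => (x i, y i)).
Proof.
move=> M g.
have [phi [phi_morph phi_x _]] := L_free M (fun i => g i - lpd_p (g i)).
have p_phi l : lpd_p (phi l) = 0.
  have compl_phi := lie_morph_comp phi_morph (pd_compl_lie_morph M two_neq0).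
  have compl_phi_eq : (fun l => phi l - lpd_p (phi l)) =1 phi.
    apply: (free_lie_algebra_morph_eq L_free compl_phi phi_morph) => i.
    by rewrite /= phi_x pd_compl_idem.
  by have := congr1 (fun z => phi l - z) (compl_phi_eq l); rewrite /= subKr subrr.
have [psi [psi_morph psi_y _]] :=
  V_free (adjoint_module phi_morph) (fun i => lpd_p (g i)).
have p_psi v : lpd_p (psi v) = psi v.
  have [psi_lin psi_act] := psi_morph.
  have [p_lin p_act] := pd_adjoint_lmod_morph phi_morph p_phi.
  have p_psi_morph : lmod_morph (N := adjoint_module phi_morph) (@lpd_p k M \o psi).
    by split=> [|a m]; [exact: linear_map_comp | rewrite /= psi_act p_act].
  apply: (free_lie_module_morph_eq V_free p_psi_morph psi_morph) => i.
  by rewrite /= psi_y pd_idem.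
have psi_abelian v w : lie_br (psi v) (psi w) = 0.
  by rewrite -p_psi -(p_psi w) lie_br_pd.
exists (sd_glue phi psi); split.
- exact: sd_glue_lie_morph.
- exact: sd_glue_proj (@pd_linear _ M) p_phi p_psi.
- by move=> i; rewrite /sd_glue /= phi_x psi_y subrK.
move=> F F_morph F_p F_m u.
have F_inl : (fun l => F (l, 0)) =1 phi.
  apply: (free_lie_algebra_morph_eq L_free (sd_inl_lie_morph F_morph) phi_morph).
  by move=> i; rewrite /= (sd_inl_eq _ (y i)) (linear_mapB F_morph.1) F_p F_m phi_x.
have F_inr : (fun v => F (0, v)) =1 psi.
  have [F_inr_lin F_inr_act] := sd_inr_lmod_morph F_morph.
  have F_inr_morph : lmod_morph (N := adjoint_module phi_morph) (fun v => F (0, v)).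
    by split=> // a v; rewrite F_inr_act /= /adjoint_act F_inl.
  apply: (free_lie_module_morph_eq V_free F_inr_morph psi_morph) => i.
  by rewrite /= (sd_inr_eq (x i)) F_p F_m psi_y.
by rewrite {1}(sd_split u) (linear_mapD F_morph.1) F_inl F_inr.
Qed.

Lemma char0_two_neq0 (k : fieldType) : [pchar k] =i pred0 -> (2%:R : k) != 0.
Proof.
move=> k_char0; apply/negP => two_eq0.
by have [q] := natf0_pchar (isT : (0 < 2)%N) two_eq0; rewrite k_char0.
Qed.

Theorem theorem3 (k : fieldType)
  (k_char0 : [pchar k] =i pred0)
  (k_infinite : forall s : seq k, exists a : k, a \notin s)
  (n : nat)
  (L : lieAlgebra k) (x : 'I_n -> L) (L_free : free_lie_algebra x)
  (V : lieModule L) (y : 'I_n -> V) (V_free : free_lie_module y) :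
  [/\ lie_axioms (@sd_bracket k L V),
      pd_axioms (@sd_bracket k L V) (@sd_projV k L V) &
      free_lie_pd (@sd_bracket k L V) (@sd_projV k L V)
        (fun i => (x i, y i))].
Proof.
split; [exact: sd_lie_axioms | exact: sd_pd_axioms |].
exact: (sd_free_lie_pd (char0_two_neq0 k_char0) L_free V_free).
Qed.
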